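(* Consider the two-route traffic model with affine routing ratios described in the context, with penetration rate $\alpha\in[0,1]$ and equilibrium $\overline{x}(\alpha)$, and assume that for every $\alpha\in[0,1]$ there is no unsatisfied demand at equilibrium, i.e., $\phi R_\ell(\overline{x}(\alpha))\le F_\ell$ for $\ell=1,2$. Let $J(x)=\phi R_1(x)\frac{x_1}{B_1}+\phi R_2(x)\frac{x_2}{B_2}$, and define $\xi_1=\frac{E_1}{E_1+E_2}$, $\xi_2=\frac{E_1E_2+E_1(F_1+F_2)}{2E_1E_2+(E_1+E_2)(F_1+F_2)}$, $\overline{\alpha}=\frac{2(r_1^0(E_1+E_2)-E_1)}{(2r_1^0-1)(E_1+E_2)}$, $\overline{\phi}=\frac{E_1E_2(1-2r_1^0)}{r_1^0(E_1+E_2)-E_1}$. Suppose $E_1\ge E_2$. Then: (a) if $r_1^0<1/2$, $\alpha\mapsto J(\overline{x}(\alpha))$ is decreasing on $[0,1]$; (b) if $1/2\le r_1^0\le\xi_2$ and $\phi<\overline{\phi}$, it is increasing on $[0,1]$; (c) if $1/2\le r_1^0\le\xi_2$ and $\phi\ge\overline{\phi}$, it is decreasing on $[0,1]$; (d) if $\xi_2\le r_1^0\le\xi_1$, it is increasing on $[0,1]$; (e) if $r_1^0\ge\xi_1$, it is increasing for $\alpha\in(\overline{\alpha},1]$ and attains its minimum at $\alpha=\overline{\alpha}$. Suppose instead $E_1<E_2$. Then: (f) if $r_1^0\le\xi_1$, $\alpha\mapsto J(\overline{x}(\alpha))$ is increasing for $\alpha\in(\overline{\alpha},1]$ and attains its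 minimum at $\alpha=\overline{\alpha}$; (g) if $\xi_1<r_1^0\le\xi_2$, it is increasing on $[0,1]$; (h) if $\xi_2<r_1^0\le1/2$ and $\phi<\overline{\phi}$, it is increasing on $[0,1]$; (i) if $\xi_2<r_1^0\le1/2$ and $\phi\ge\overline{\phi}$, it is decreasing on $[0,1]$; (j) if $r_1^0>1/2$, it is decreasing on $[0,1]$.
   Context: Two routes $i=1,2$ connect an origin to a destination, with positive parameters $B_i$ (jam density), $C_i$ (critical density), $F_i$ (capacity), $C_i<B_i$, and constant demand $\phi>0$. Set $v_i=F_i/C_i$ and $E_i=v_iB_i$. The state $x=(x_1,x_2)\in\Omega:=[0,B_1]\times[0,B_2]$ evolves by $\dot x_i=\min\{\phi R_i(x),S_i(x_i)\}-D_i(x_i)$, with $S_i(x_i)=F_i$ if $x_i<C_i$, $S_i(x_i)=\frac{F_i}{B_i-C_i}(B_i-x_i)$ otherwise; $D_i(x_i)=v_ix_i$ if $x_i<C_i$, $D_i(x_i)=F_i$ otherwise. The routing ratios are affine: with penetration rate $\alpha$ and constants $r_1^0,r_2^0\ge0$, $r_1^0+r_2^0=1$, $R_1(x)=(1-\alpha)r_1^0+\alpha\big(\tfrac12+\tfrac12(\tfrac{x_2}{B_2}-\tfrac{x_1}{B_1})\big)$, $R_2(x)=(1-\alpha)r_2^0+\alpha\big(\tfrac12+\tfrac12(\tfrac{x_1}{B_1}-\tfrac{x_2}{B_2})\big)$. Standing assumptions: $\phi<F_1+F_2$; $F_i>(1-\alpha)\phi r_i^0$ for $i=1,2$; $\phi<E_i$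 for $i=1,2$. The system has, for each $\alpha$, a unique equilibrium $\overline{x}(\alpha)\in\Omega$. *)

From Stdlib Require Import Reals.
Open Scope R_scope.

(* Supply function S_i and demand function D_i of route i,
   with jam density B, critical density C, capacity F. *)
Definition supply (B C F x : R) : R :=
  if Rlt_dec x C then F else F / (B - C) * (B - x).

Definition demand (C F x : R) : R :=
  if Rlt_dec x C then (F / C) * x else F.

Definition Rt1 (alpha r10 B1 B2 x1 x2 : R) : R :=
  (1 - alpha) * r10 + alpha * (1/2 + 1/2 * (x2 / B2 - x1 / B1)).

Definition Rt2 (alpha r20 B1 B2 x1 x2 : R) : R :=
  (1 - alpha) * r20 + alpha * (1/2 + 1/2 * (x1 / B1 - x2 / B2)).

(* x = (x1,x2) is an equilibrium in Omega = [0,B1] x [0,B2] of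
   xdot_i = min{phi R_i(x), S_i(x_i)} - D_i(x_i). *)
Definition is_equilibrium (B1 C1 F1 B2 C2 F2 phi r10 r20 alpha x1 x2 : R) : Prop :=
  0 <= x1 <= B1 /\ 0 <= x2 <= B2 /\
  Rmin (phi * Rt1 alpha r10 B1 B2 x1 x2) (supply B1 C1 F1 x1) - demand C1 F1 x1 = 0 /\
  Rmin (phi * Rt2 alpha r20 B1 B2 x1 x2) (supply B2 C2 F2 x2) - demand C2 F2 x2 = 0.

Definition Jcost (B1 B2 phi r10 r20 alpha x1 x2 : R) : R :=
  phi * Rt1 alpha r10 B1 B2 x1 x2 * (x1 / B1) +
  phi * Rt2 alpha r20 B1 B2 x1 x2 * (x2 / B2).

Definition increasing_on (P : R -> Prop) (g : R -> R) : Prop :=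
  forall a b, P a -> P b -> a <= b -> g a <= g b.

Definition decreasing_on (P : R -> Prop) (g : R -> R) : Prop :=
  forall a b, P a -> P b -> a <= b -> g b <= g a.

Definition unit_interval (a : R) : Prop := 0 <= a <= 1.

Definition incr_after_min (abar : R) (g : R -> R) : Prop :=
  increasing_on (fun a => abar < a <= 1) g /\
  unit_interval abar /\
  (forall a, unit_interval a -> g abar <= g a).

From Stdlib Require Import Reals Lra Psatz.
Open Scope R_scope.

(* When no demand is left unsatisfied, both routes are in free flow at
   equilibrium: phi R_i = E_i y_i with y_i = x_i / B_i.  Hence J = E1 y1^2 + E2 y2^2
   with E1 y1 + E2 y2 = phi, i.e. J = phi^2/(E1+E2) + E1 E2/(E1+E2) (y1 - y2)^2.
   The equilibrium equations are linear in the gap y1 - y2, which is therefore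
   phi L(alpha) / D(alpha) with L affine and D affine and positive: a Moebius
   function of alpha, monotone with the sign of a constant N.  So J increases
   where L(alpha) N >= 0, and items (a)-(j) are the sign patterns of
   L(0) = 2 (r E1 + r E2 - E1), L(1) = E2 - E1 and N in each parameter regime;
   alpha_bar is the root of L. *)

Definition ratio (l0 l1 d0 d1 a : R) : R := ((1 - a) * l0 + a * l1) / (d0 + d1 * a).

Section SquaredRatio.
Variables l0 l1 d0 d1 : R.
Hypotheses (d0_pos : 0 < d0) (d1_ge0 : 0 <= d1).

Definition ratio_trend : R := (l1 - l0) * d0 - l0 * d1.

Lemma ratio_denominator_pos a : 0 <= a -> 0 < d0 + d1 * a.
Proof. nra. Qed.

Lemma ratio_sub a b : 0 <= a -> 0 <= b ->
  ratio l0 l1 d0 d1 b - ratio l0 l1 d0 d1 a =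
  (b - a) * ratio_trend / ((d0 + d1 * a) * (d0 + d1 * b)).
Proof.
  intros ha hb. unfold ratio, ratio_trend.
  field; split; apply Rgt_not_eq, ratio_denominator_pos; assumption.
Qed.

Lemma ratio_trend_mul a : 0 <= a ->
  ratio_trend * ratio l0 l1 d0 d1 a * (d0 + d1 * a) = ratio_trend * ((1 - a) * l0 + a * l1).
Proof.
  intros ha. unfold ratio. field. apply Rgt_not_eq, ratio_denominator_pos; assumption.
Qed.

Lemma ratio_sqr_sub a b : 0 <= a -> 0 <= b ->
  ratio l0 l1 d0 d1 b ^ 2 - ratio l0 l1 d0 d1 a ^ 2 =
  (b - a) / ((d0 + d1 * a) * (d0 + d1 * b)) *
  (ratio_trend * ratio l0 l1 d0 d1 a + ratio_trend * ratio l0 l1 d0 d1 b).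
Proof.
  intros ha hb.
  replace (ratio l0 l1 d0 d1 b ^ 2 - ratio l0 l1 d0 d1 a ^ 2) with
    ((ratio l0 l1 d0 d1 b - ratio l0 l1 d0 d1 a) * (ratio l0 l1 d0 d1 a + ratio l0 l1 d0 d1 b))
    by ring.
  rewrite ratio_sub by assumption.
  pose proof (ratio_denominator_pos a ha). pose proof (ratio_denominator_pos b hb).
  field. lra.
Qed.

Lemma ratio_sqr_le a b : 0 <= a <= b ->
  0 <= ratio_trend * ((1 - a) * l0 + a * l1) ->
  0 <= ratio_trend * ((1 - b) * l0 + b * l1) ->
  ratio l0 l1 d0 d1 a ^ 2 <= ratio l0 l1 d0 d1 b ^ 2.
Proof.
  intros [ha hab] hLa hLb.
  pose proof (ratio_denominator_pos a ha) as Da.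
  pose proof (ratio_denominator_pos b ltac:(lra)) as Db.
  pose proof (ratio_trend_mul a ha). pose proof (ratio_trend_mul b ltac:(lra)).
  assert (0 <= ratio_trend * ratio l0 l1 d0 d1 a) by nra.
  assert (0 <= ratio_trend * ratio l0 l1 d0 d1 b) by nra.
  assert (0 <= (b - a) / ((d0 + d1 * a) * (d0 + d1 * b))).
  { apply Rmult_le_pos; [lra|]. left. apply Rinv_0_lt_compat. nra. }
  pose proof (ratio_sqr_sub a b ha ltac:(lra)). nra.
Qed.

Lemma ratio_sqr_ge a b : 0 <= a <= b ->
  ratio_trend * ((1 - a) * l0 + a * l1) <= 0 ->
  ratio_trend * ((1 - b) * l0 + b * l1) <= 0 ->
  ratio l0 l1 d0 d1 b ^ 2 <= ratio l0 l1 d0 d1 a ^ 2.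
Proof.
  intros [ha hab] hLa hLb.
  pose proof (ratio_denominator_pos a ha) as Da.
  pose proof (ratio_denominator_pos b ltac:(lra)) as Db.
  pose proof (ratio_trend_mul a ha). pose proof (ratio_trend_mul b ltac:(lra)).
  assert (ratio_trend * ratio l0 l1 d0 d1 a <= 0) by nra.
  assert (ratio_trend * ratio l0 l1 d0 d1 b <= 0) by nra.
  assert (0 <= (b - a) / ((d0 + d1 * a) * (d0 + d1 * b))).
  { apply Rmult_le_pos; [lra|]. left. apply Rinv_0_lt_compat. nra. }
  pose proof (ratio_sqr_sub a b ha ltac:(lra)). nra.
Qed.

Lemma ratio_sqr_increasing :
  0 <= ratio_trend * l0 -> 0 <= ratio_trend * l1 ->
  increasing_on unit_interval (fun a => ratio l0 l1 d0 d1 a ^ 2).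
Proof.
  intros h0 h1 a b [ha0 ha1] [hb0 hb1] hab.
  apply ratio_sqr_le; nra.
Qed.

Lemma ratio_sqr_decreasing :
  ratio_trend * l0 <= 0 -> ratio_trend * l1 <= 0 ->
  decreasing_on unit_interval (fun a => ratio l0 l1 d0 d1 a ^ 2).
Proof.
  intros h0 h1 a b [ha0 ha1] [hb0 hb1] hab.
  apply ratio_sqr_ge; nra.
Qed.

Lemma ratio_sqr_incr_after_min :
  l0 * l1 <= 0 -> 0 <= ratio_trend * (l1 - l0) ->
  incr_after_min (l0 / (l0 - l1)) (fun a => ratio l0 l1 d0 d1 a ^ 2).
Proof.
  intros hl hN. set (abar := l0 / (l0 - l1)).
  assert (root : unit_interval abar /\ (1 - abar) * l0 + abar * l1 = 0).
  { destruct (Req_dec l0 l1) as [e | ne].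
    (* Here l0 = l1 = 0 and abar = 0 / 0, which Rocq evaluates to 0. *)
    - assert (h0 : l0 = 0) by nra. assert (h1 : l1 = 0) by lra.
      unfold abar. rewrite h0, h1, Rdiv_0_l. split; [split|]; lra.
    - assert (e : abar * (l0 - l1) = l0) by (unfold abar; field; lra).
      assert (sq : 0 < (l0 - l1) * (l0 - l1)) by (apply Rsqr_pos_lt; lra).
      assert (abar * ((l0 - l1) * (l0 - l1)) = l0 * (l0 - l1))
        by (rewrite <- Rmult_assoc, e; ring).
      split; [split|]; nra. }
  destruct root as [abar_unit L_abar].
  assert (L_shift : forall a, (1 - a) * l0 + a * l1 = (a - abar) * (l1 - l0)).
  { intro a. transitivity ((1 - a) * l0 + a * l1 - ((1 - abar) * l0 + abar * l1));
      [rewrite L_abar | ]; ring. }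
  split; [| split; [exact abar_unit |]].
  - intros a b ha hb hab. destruct abar_unit.
    apply ratio_sqr_le; [lra | rewrite L_shift; nra | rewrite L_shift; nra].
  - intros a _. cbv beta. unfold ratio at 1. rewrite L_abar, Rdiv_0_l.
    replace (0 ^ 2) with 0 by ring. apply pow2_ge_0.
Qed.

End SquaredRatio.

Lemma increasing_on_affine {P : R -> Prop} {g h : R -> R} {c0 c1 : R} :
  (forall a, P a -> g a = c0 + c1 * h a) -> 0 <= c1 ->
  increasing_on P h -> increasing_on P g.
Proof.
  intros e hc hh a b ha hb hab. rewrite (e a ha), (e b hb).
  apply Rplus_le_compat_l, Rmult_le_compat_l; auto.
Qed.

Lemma decreasing_on_affine {P : R -> Prop} {g h : R -> R} {c0 c1 : R} :
  (forall a, P a -> g a = c0 + c1 * h a) -> 0 <= c1 ->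
  decreasing_on P h -> decreasing_on P g.
Proof.
  intros e hc hh a b ha hb hab. rewrite (e a ha), (e b hb).
  apply Rplus_le_compat_l, Rmult_le_compat_l; auto.
Qed.

Lemma incr_after_min_affine {abar : R} {g h : R -> R} {c0 c1 : R} :
  (forall a, unit_interval a -> g a = c0 + c1 * h a) -> 0 <= c1 ->
  incr_after_min abar h -> incr_after_min abar g.
Proof.
  intros e hc [hinc [habar hmin]]. split; [| split; [exact habar |]].
  - apply (increasing_on_affine (h := h) (c0 := c0) (c1 := c1)); try assumption.
    intros a ha. apply e. destruct habar. split; lra.
  - intros a ha. rewrite (e a ha), (e abar habar).
    apply Rplus_le_compat_l, Rmult_le_compat_l; auto.
Qed.

Lemma le_div_iff x y c : 0 < c -> x <= y / c <-> x * c <= y.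
Proof. intros hc. assert (y / c * c = y) by (field; lra). split; nra. Qed.

Lemma div_le_iff x y c : 0 < c -> y / c <= x <-> y <= x * c.
Proof. intros hc. assert (y / c * c = y) by (field; lra). split; nra. Qed.

Lemma div_lt_iff x y c : 0 < c -> y / c < x <-> y < x * c.
Proof. intros hc. assert (y / c * c = y) by (field; lra). split; nra. Qed.

Lemma weighted_sqr_sum E1 E2 y1 y2 : E1 + E2 <> 0 ->
  E1 * y1 ^ 2 + E2 * y2 ^ 2 =
  (E1 * y1 + E2 * y2) ^ 2 / (E1 + E2) + E1 * E2 / (E1 + E2) * (y1 - y2) ^ 2.
Proof. intros. field. assumption. Qed.

Lemma equilibrium_free_flow B C F P x : 0 < C -> C < B -> 0 < F ->
  Rmin P (supply B C F x) - demand C F x = 0 -> P <= F -> P = F / C * x.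
Proof.
  intros hC hCB hF equil hP. unfold supply, demand in equil.
  destruct (Rlt_dec x C) as [hx | hx].
  - rewrite Rmin_left in equil; lra.
  - assert (congested : F <= F / (B - C) * (B - x)).
    { pose proof (Rmin_r P (F / (B - C) * (B - x))). lra. }
    assert (e : F / (B - C) * (B - x) * (B - C) = F * (B - x)) by (field; lra).
    assert (x = C) by nra. subst x.
    assert (P = F) by (pose proof (Rmin_l P (F / (B - C) * (B - C))); lra).
    subst P. field. lra.
Qed.

Definition imbalance (E1 E2 P r a : R) : R :=
  ratio (2 * (r * (E1 + E2) - E1)) (E2 - E1) (2 * E1 * E2) (P * (E1 + E2)) a.

Definition imbalance_trend (E1 E2 P r : R) : R :=
  E1 * E2 * (1 - 2 * r) - P * (r * (E1 + E2) - E1).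

Lemma ratio_trend_imbalance E1 E2 P r :
  ratio_trend (2 * (r * (E1 + E2) - E1)) (E2 - E1) (2 * E1 * E2) (P * (E1 + E2)) =
  2 * (E1 + E2) * imbalance_trend E1 E2 P r.
Proof. unfold ratio_trend, imbalance_trend. ring. Qed.

Lemma density_gap E1 E2 P r a y1 y2 : 0 < E1 -> 0 < E2 -> 0 < P -> 0 <= a ->
  P * ((1 - a) * r + a * (1/2 + 1/2 * (y2 - y1))) = E1 * y1 ->
  P * ((1 - a) * (1 - r) + a * (1/2 + 1/2 * (y1 - y2))) = E2 * y2 ->
  y1 - y2 = P * imbalance E1 E2 P r a.
Proof.
  intros hE1 hE2 hP ha e1 e2.
  pose proof (ratio_denominator_pos (2 * E1 * E2) (P * (E1 + E2)) ltac:(nra) ltac:(nra) a ha).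
  assert (gap : (y1 - y2) * (2 * E1 * E2 + P * (E1 + E2) * a) =
                P * ((1 - a) * (2 * (r * (E1 + E2) - E1)) + a * (E2 - E1))).
  { apply Rminus_diag_uniq.
    transitivity (2 * E2 * (E1 * y1 - P * ((1 - a) * r + a * (1/2 + 1/2 * (y2 - y1))))
                - 2 * E1 * (E2 * y2 - P * ((1 - a) * (1 - r) + a * (1/2 + 1/2 * (y1 - y2)))));
      [field | rewrite e1, e2; ring]. }
  unfold imbalance, ratio. rewrite Rmult_div_assoc, <- gap. field. lra.
Qed.

Lemma Jcost_free_flow E1 E2 B1 B2 P r a x1 x2 : 0 < E1 -> 0 < E2 -> 0 < P -> 0 <= a ->
  P * Rt1 a r B1 B2 x1 x2 = E1 * (x1 / B1) ->
  P * Rt2 a (1 - r) B1 B2 x1 x2 = E2 * (x2 / B2) ->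
  Jcost B1 B2 P r (1 - r) a x1 x2 =
  P ^ 2 / (E1 + E2) + P ^ 2 * (E1 * E2 / (E1 + E2)) * imbalance E1 E2 P r a ^ 2.
Proof.
  intros hE1 hE2 hP ha e1 e2. unfold Jcost. rewrite e1, e2.
  unfold Rt1, Rt2 in e1, e2. set (y1 := x1 / B1) in *. set (y2 := x2 / B2) in *.
  assert (flow : E1 * y1 + E2 * y2 = P) by (rewrite <- e1, <- e2; field).
  pose proof (density_gap E1 E2 P r a y1 y2 hE1 hE2 hP ha e1 e2) as gap.
  replace (P ^ 2 * (E1 * E2 / (E1 + E2)) * imbalance E1 E2 P r a ^ 2)
    with (E1 * E2 / (E1 + E2) * (y1 - y2) ^ 2) by (rewrite gap; ring).
  rewrite <- flow at 1. rewrite <- weighted_sqr_sum by lra. ring.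
Qed.

Definition xi1 (E1 E2 : R) : R := E1 / (E1 + E2).
Definition xi2 (E1 E2 F : R) : R :=
  (E1 * E2 + E1 * F) / (2 * E1 * E2 + (E1 + E2) * F).
Definition alpha_bar (E1 E2 r : R) : R :=
  2 * (r * (E1 + E2) - E1) / ((2 * r - 1) * (E1 + E2)).
Definition phi_bar (E1 E2 r : R) : R :=
  E1 * E2 * (1 - 2 * r) / (r * (E1 + E2) - E1).

Section Imbalance.
Variables E1 E2 P r : R.
Hypotheses (hE1 : 0 < E1) (hE2 : 0 < E2) (hP : 0 < P).

Lemma imbalance_sqr_increasing :
  0 <= imbalance_trend E1 E2 P r * (r * (E1 + E2) - E1) ->
  0 <= imbalance_trend E1 E2 P r * (E2 - E1) ->
  increasing_on unit_interval (fun a => imbalance E1 E2 P r a ^ 2).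
Proof.
  intros h0 h1. apply ratio_sqr_increasing; try nra; rewrite ratio_trend_imbalance; nra.
Qed.

Lemma imbalance_sqr_decreasing :
  imbalance_trend E1 E2 P r * (r * (E1 + E2) - E1) <= 0 ->
  imbalance_trend E1 E2 P r * (E2 - E1) <= 0 ->
  decreasing_on unit_interval (fun a => imbalance E1 E2 P r a ^ 2).
Proof.
  intros h0 h1. apply ratio_sqr_decreasing; try nra; rewrite ratio_trend_imbalance; nra.
Qed.

Lemma imbalance_sqr_incr_after_min :
  (r * (E1 + E2) - E1) * (E2 - E1) <= 0 ->
  0 <= imbalance_trend E1 E2 P r * (1 - 2 * r) ->
  incr_after_min (alpha_bar E1 E2 r) (fun a => imbalance E1 E2 P r a ^ 2).
Proof.
  intros h01 hN. unfold alpha_bar.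
  replace ((2 * r - 1) * (E1 + E2)) with (2 * (r * (E1 + E2) - E1) - (E2 - E1)) by ring.
  apply ratio_sqr_incr_after_min; try nra.
  rewrite ratio_trend_imbalance.
  replace (2 * (E1 + E2) * imbalance_trend E1 E2 P r * (E2 - E1 - 2 * (r * (E1 + E2) - E1)))
    with (2 * (E1 + E2) * (E1 + E2) * (imbalance_trend E1 E2 P r * (1 - 2 * r))) by ring.
  apply Rmult_le_pos; nra.
Qed.

End Imbalance.

Section Regimes.
Variables E1 E2 F P r : R.
Hypotheses (hE1 : 0 < E1) (hE2 : 0 < E2) (hP : 0 < P) (hPF : P < F).

Lemma le_xi1_iff : r <= xi1 E1 E2 <-> r * (E1 + E2) - E1 <= 0.
Proof. unfold xi1. rewrite le_div_iff by lra. lra. Qed.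

Lemma xi1_le_iff : xi1 E1 E2 <= r <-> 0 <= r * (E1 + E2) - E1.
Proof. unfold xi1. rewrite div_le_iff by lra. lra. Qed.

Lemma xi1_lt_iff : xi1 E1 E2 < r <-> 0 < r * (E1 + E2) - E1.
Proof. unfold xi1. rewrite div_lt_iff by lra. lra. Qed.

Lemma le_xi2_iff : r <= xi2 E1 E2 F <->
  (r * (E1 + E2) - E1) * F <= E1 * E2 * (1 - 2 * r).
Proof. unfold xi2. rewrite le_div_iff by nra. lra. Qed.

Lemma xi2_le_iff : xi2 E1 E2 F <= r <->
  E1 * E2 * (1 - 2 * r) <= (r * (E1 + E2) - E1) * F.
Proof. unfold xi2. rewrite div_le_iff by nra. lra. Qed.

Lemma xi2_lt_iff : xi2 E1 E2 F < r <->
  E1 * E2 * (1 - 2 * r) < (r * (E1 + E2) - E1) * F.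
Proof. unfold xi2. rewrite div_lt_iff by nra. lra. Qed.

Lemma phi_bar_mul : r * (E1 + E2) - E1 <> 0 ->
  phi_bar E1 E2 r * (r * (E1 + E2) - E1) = E1 * E2 * (1 - 2 * r).
Proof. intros hA. unfold phi_bar. field. exact hA. Qed.

Lemma phi_bar_degenerate : r * (E1 + E2) - E1 = 0 -> phi_bar E1 E2 r = 0.
Proof. intros hA. unfold phi_bar. rewrite hA. apply Rdiv_0_r. Qed.

Lemma imbalance_sqr_item_a : E1 >= E2 -> r < 1/2 ->
  decreasing_on unit_interval (fun a => imbalance E1 E2 P r a ^ 2).
Proof.
  intros hE hr.
  assert (hA : r * (E1 + E2) - E1 < 0) by nra.
  assert (hT : 0 < imbalance_trend E1 E2 P r).
  { unfold imbalance_trend.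
    assert (0 < E1 * E2 * (1 - 2 * r)) by (apply Rmult_lt_0_compat; nra). nra. }
  apply imbalance_sqr_decreasing; nra.
Qed.

Lemma imbalance_sqr_item_b : E1 >= E2 -> 1/2 <= r <= xi2 E1 E2 F -> P < phi_bar E1 E2 r ->
  increasing_on unit_interval (fun a => imbalance E1 E2 P r a ^ 2).
Proof.
  intros hE [hr1 hr2] hphi. apply le_xi2_iff in hr2.
  assert (hX : E1 * E2 * (1 - 2 * r) <= 0) by (assert (0 < E1 * E2) by nra; nra).
  assert (hA : r * (E1 + E2) - E1 < 0).
  { destruct (Rtotal_order (r * (E1 + E2) - E1) 0) as [h | [h | h]]; [exact h | |].
    - rewrite phi_bar_degenerate in hphi by exact h. lra.
    - nra. }
  assert (hT : imbalance_trend E1 E2 P r < 0).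
  { pose proof (phi_bar_mul ltac:(lra)). unfold imbalance_trend. nra. }
  apply imbalance_sqr_increasing; nra.
Qed.

Lemma imbalance_sqr_item_c : E1 >= E2 -> 1/2 <= r <= xi2 E1 E2 F -> P >= phi_bar E1 E2 r ->
  decreasing_on unit_interval (fun a => imbalance E1 E2 P r a ^ 2).
Proof.
  intros hE [hr1 hr2] hphi. apply le_xi2_iff in hr2.
  assert (hX : E1 * E2 * (1 - 2 * r) <= 0) by (assert (0 < E1 * E2) by nra; nra).
  assert (hA : r * (E1 + E2) - E1 <= 0) by nra.
  assert (hT : 0 <= imbalance_trend E1 E2 P r).
  { unfold imbalance_trend. destruct hA as [hA | hA].
    - pose proof (phi_bar_mul ltac:(lra)). nra.
    - rewrite hA in hr2 |- *. lra. }
  apply imbalance_sqr_decreasing; nra.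
Qed.

Lemma imbalance_sqr_item_d : E1 >= E2 -> xi2 E1 E2 F <= r <= xi1 E1 E2 ->
  increasing_on unit_interval (fun a => imbalance E1 E2 P r a ^ 2).
Proof.
  intros hE [hr1 hr2]. apply xi2_le_iff in hr1. apply le_xi1_iff in hr2.
  assert (hT : imbalance_trend E1 E2 P r <= 0) by (unfold imbalance_trend; nra).
  apply imbalance_sqr_increasing; nra.
Qed.

Lemma imbalance_sqr_item_e : E1 >= E2 -> r >= xi1 E1 E2 ->
  incr_after_min (alpha_bar E1 E2 r) (fun a => imbalance E1 E2 P r a ^ 2).
Proof.
  intros hE hr. apply Rge_le, xi1_le_iff in hr.
  assert (hs : 1/2 <= r) by nra.
  assert (hT : imbalance_trend E1 E2 P r <= 0).
  { unfold imbalance_trend. assert (0 < E1 * E2) by nra. nra. }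
  apply imbalance_sqr_incr_after_min; nra.
Qed.

Lemma imbalance_sqr_item_f : E1 < E2 -> r <= xi1 E1 E2 ->
  incr_after_min (alpha_bar E1 E2 r) (fun a => imbalance E1 E2 P r a ^ 2).
Proof.
  intros hE hr. apply le_xi1_iff in hr.
  assert (hs : r < 1/2) by nra.
  assert (hT : 0 <= imbalance_trend E1 E2 P r).
  { unfold imbalance_trend. assert (0 < E1 * E2) by nra. nra. }
  apply imbalance_sqr_incr_after_min; nra.
Qed.

Lemma imbalance_sqr_item_g : E1 < E2 -> xi1 E1 E2 < r <= xi2 E1 E2 F ->
  increasing_on unit_interval (fun a => imbalance E1 E2 P r a ^ 2).
Proof.
  intros hE [hr1 hr2]. apply xi1_lt_iff in hr1. apply le_xi2_iff in hr2.
  assert (hT : 0 <= imbalance_trend E1 E2 P r) by (unfold imbalance_trend; nra).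
  apply imbalance_sqr_increasing; nra.
Qed.

Lemma imbalance_sqr_item_h : E1 < E2 -> xi2 E1 E2 F < r <= 1/2 -> P < phi_bar E1 E2 r ->
  increasing_on unit_interval (fun a => imbalance E1 E2 P r a ^ 2).
Proof.
  intros hE [hr1 hr2] hphi. apply xi2_lt_iff in hr1.
  assert (hX : 0 <= E1 * E2 * (1 - 2 * r)) by (assert (0 < E1 * E2) by nra; nra).
  assert (hA : 0 < r * (E1 + E2) - E1) by nra.
  assert (hT : 0 < imbalance_trend E1 E2 P r).
  { pose proof (phi_bar_mul ltac:(lra)). unfold imbalance_trend. nra. }
  apply imbalance_sqr_increasing; nra.
Qed.

Lemma imbalance_sqr_item_i : E1 < E2 -> xi2 E1 E2 F < r <= 1/2 -> P >= phi_bar E1 E2 r ->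
  decreasing_on unit_interval (fun a => imbalance E1 E2 P r a ^ 2).
Proof.
  intros hE [hr1 hr2] hphi. apply xi2_lt_iff in hr1.
  assert (hX : 0 <= E1 * E2 * (1 - 2 * r)) by (assert (0 < E1 * E2) by nra; nra).
  assert (hA : 0 < r * (E1 + E2) - E1) by nra.
  assert (hT : imbalance_trend E1 E2 P r <= 0).
  { pose proof (phi_bar_mul ltac:(lra)). unfold imbalance_trend. nra. }
  apply imbalance_sqr_decreasing; nra.
Qed.

Lemma imbalance_sqr_item_j : E1 < E2 -> r > 1/2 ->
  decreasing_on unit_interval (fun a => imbalance E1 E2 P r a ^ 2).
Proof.
  intros hE hr.
  assert (hA : 0 < r * (E1 + E2) - E1) by nra.
  assert (hT : imbalance_trend E1 E2 P r < 0).
  { unfold imbalance_trend. assert (0 < E1 * E2) by nra. nra. }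
  apply imbalance_sqr_decreasing; nra.
Qed.

End Regimes.

Theorem proposition4
  (B1 C1 F1 B2 C2 F2 phi r10 r20 : R)
  (xbar1 xbar2 : R -> R)
  (hB1 : 0 < B1) (hC1 : 0 < C1) (hF1 : 0 < F1) (hCB1 : C1 < B1)
  (hB2 : 0 < B2) (hC2 : 0 < C2) (hF2 : 0 < F2) (hCB2 : C2 < B2)
  (hphi : 0 < phi)
  (hr10 : 0 <= r10) (hr20 : 0 <= r20) (hr : r10 + r20 = 1)
  (hcap : phi < F1 + F2)
  (hF1r : forall alpha, unit_interval alpha -> F1 > (1 - alpha) * phi * r10)
  (hF2r : forall alpha, unit_interval alpha -> F2 > (1 - alpha) * phi * r20)
  (hE1 : phi < F1 / C1 * B1)
  (hE2 : phi < F2 / C2 * B2)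
  (heq : forall alpha, unit_interval alpha ->
     is_equilibrium B1 C1 F1 B2 C2 F2 phi r10 r20 alpha (xbar1 alpha) (xbar2 alpha))
  (hnud : forall alpha, unit_interval alpha ->
     phi * Rt1 alpha r10 B1 B2 (xbar1 alpha) (xbar2 alpha) <= F1 /\
     phi * Rt2 alpha r20 B1 B2 (xbar1 alpha) (xbar2 alpha) <= F2) :
  let E1 := F1 / C1 * B1 in
  let E2 := F2 / C2 * B2 in
  let g := fun alpha =>
    Jcost B1 B2 phi r10 r20 alpha (xbar1 alpha) (xbar2 alpha) in
  let xi1 := E1 / (E1 + E2) in
  let xi2 := (E1 * E2 + E1 * (F1 + F2)) /
             (2 * E1 * E2 + (E1 + E2) * (F1 + F2)) in
  let abar := 2 * (r10 * (E1 + E2) - E1) / ((2 * r10 - 1) * (E1 + E2)) in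
  let phibar := E1 * E2 * (1 - 2 * r10) / (r10 * (E1 + E2) - E1) in
  (E1 >= E2 ->
     (r10 < 1/2 -> decreasing_on unit_interval g) /\
     (1/2 <= r10 <= xi2 -> phi < phibar -> increasing_on unit_interval g) /\
     (1/2 <= r10 <= xi2 -> phi >= phibar -> decreasing_on unit_interval g) /\
     (xi2 <= r10 <= xi1 -> increasing_on unit_interval g) /\
     (r10 >= xi1 -> incr_after_min abar g)) /\
  (E1 < E2 ->
     (r10 <= xi1 -> incr_after_min abar g) /\
     (xi1 < r10 <= xi2 -> increasing_on unit_interval g) /\
     (xi2 < r10 <= 1/2 -> phi < phibar -> increasing_on unit_interval g) /\
     (xi2 < r10 <= 1/2 -> phi >= phibar -> decreasing_on unit_interval g) /\
     (r10 > 1/2 -> decreasing_on unit_interval g)).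
Proof.
  (* hF1r, hF2r, hE1 and hE2 only ensure that the equilibrium exists; heq provides it. *)
  intros E1 E2 g xi1 xi2 abar phibar.
  assert (hE1p : 0 < E1) by (apply Rmult_lt_0_compat; [apply Rdiv_lt_0_compat |]; lra).
  assert (hE2p : 0 < E2) by (apply Rmult_lt_0_compat; [apply Rdiv_lt_0_compat |]; lra).
  assert (r20_eq : r20 = 1 - r10) by lra. subst r20.
  set (c1 := phi ^ 2 * (E1 * E2 / (E1 + E2))).
  assert (hc1 : 0 <= c1).
  { apply Rmult_le_pos; [apply pow2_ge_0 | left; apply Rdiv_lt_0_compat; nra]. }
  assert (g_eq : forall a, unit_interval a ->
    g a = phi ^ 2 / (E1 + E2) + c1 * imbalance E1 E2 phi r10 a ^ 2).
  { intros a ha. destruct (heq a ha) as (_ & _ & eq1 & eq2).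
    destruct (hnud a ha) as [nud1 nud2].
    apply Jcost_free_flow; try assumption; [apply ha | |].
    - rewrite (equilibrium_free_flow B1 C1 F1 _ _ hC1 hCB1 hF1 eq1 nud1).
      unfold E1. field. lra.
    - rewrite (equilibrium_free_flow B2 C2 F2 _ _ hC2 hCB2 hF2 eq2 nud2).
      unfold E2. field. lra. }
  split; intros hE; (split; [| split; [| split; [| split]]]); intros.
  - apply (decreasing_on_affine g_eq hc1), imbalance_sqr_item_a; assumption.
  - apply (increasing_on_affine g_eq hc1), (imbalance_sqr_item_b E1 E2 (F1 + F2)); assumption.
  - apply (decreasing_on_affine g_eq hc1), (imbalance_sqr_item_c E1 E2 (F1 + F2)); assumption.
  - apply (increasing_on_affine g_eq hc1), (imbalance_sqr_item_d E1 E2 (F1 + F2)); assumption.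
  - apply (incr_after_min_affine g_eq hc1), imbalance_sqr_item_e; assumption.
  - apply (incr_after_min_affine g_eq hc1), imbalance_sqr_item_f; assumption.
  - apply (increasing_on_affine g_eq hc1), (imbalance_sqr_item_g E1 E2 (F1 + F2)); assumption.
  - apply (increasing_on_affine g_eq hc1), (imbalance_sqr_item_h E1 E2 (F1 + F2)); assumption.
  - apply (decreasing_on_affine g_eq hc1), (imbalance_sqr_item_i E1 E2 (F1 + F2)); assumption.
  - apply (decreasing_on_affine g_eq hc1), imbalance_sqr_item_j; assumption.
Qed.
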